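(* Let $\Omega$ be a finite set, $f:2^{\Omega}\to\mathbb{R}_{+}$ nonnegative and increasing, $K\in\{1,\dots,|\Omega|\}$ and $L\in\{0,\dots,|\Omega|\}$. Let $\widehat{\mathcal{S}}_K\in\arg\max\{f(\mathcal{S}):|\mathcal{S}|\le K\}$, let $\mathcal{S}_0,\dots,\mathcal{S}_L$ be the greedy sets and $\mathscr{C}_L=\{\emptyset,\mathcal{S}_1,\dots,\mathcal{S}_L\}$. Then $$f(\mathcal{S}_L)\ge\min\Big\{f(\widehat{\mathcal{S}}_K),\ (1-(1-1/K)^L)\big[f(\widehat{\mathcal{S}}_K)-\min\{\widehat{\mathcal{I}}^{\mathscr{C}_L,K}[f],f(\widehat{\mathcal{S}}_K)\}\big]\Big\}.$$
   Context: Greedy algorithm: $\mathcal{S}_0=\emptyset$ and $\mathcal{S}_{\ell+1}=\mathcal{S}_\ell\cup\{s_{\ell+1}\}$ with $s_{\ell+1}\in\arg\max_{s\in\Omega\setminus\mathcal{S}_\ell}f(\mathcal{S}_\ell\cup\{s\})$. Local submodularity index: $\phi^{\mathcal{A},\mathcal{B}}[f]=[f(\mathcal{A}\cup\mathcal{B})-f(\mathcal{A})]-\sum_{s\in\mathcal{B}}[f(\mathcal{A}\cup\{s\})-f(\mathcal{A})]$. For a collection $\mathscr{C}$ of subsets of $\Omega$, $\widehat{\mathcal{I}}^{\mathscr{C},K}[f]=\max\{\phi^{\mathcal{A},\mathcal{B}}[f]:\mathcal{A}\in\mathscr{C},\mathcal{B}\subseteq\Omega,\mathcal{A}\cap\mathcal{B}=\emptyset,2\le|\mathcal{B}|\le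 K\}$, and $\widehat{\mathcal{I}}^{\mathscr{C},K}[f]=0$ if no such pair exists. *)

From HB Require Import structures.
From mathcomp Require Import all_boot all_order all_algebra.
Set Implicit Arguments. Unset Strict Implicit. Unset Printing Implicit Defensive.
Import Order.TTheory GRing.Theory Num.Theory.
Local Open Scope ring_scope.

Definition phi_idx (R : numDomainType) (T : finType) (f : {set T} -> R)
    (A B : {set T}) : R :=
  (f (A :|: B) - f A) - \sum_(s in B) (f (s |: A) - f A).

Definition phi_vals (R : numDomainType) (T : finType) (C : {set {set T}})
    (K : nat) (f : {set T} -> R) : seq R :=
  [seq phi_idx f AB.1 AB.2 |
     AB <- [seq (A, B) | A <- enum C, B <- enum [set: {set T}]]
     & (AB.1 :&: AB.2 == set0) && (2 <= #|AB.2| <= K)%N].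

(* \hat I^{C,K}[f]: the maximum of the values above, 0 if there is none. *)
Definition loc_sub_index (R : realDomainType) (T : finType) (C : {set {set T}})
    (K : nat) (f : {set T} -> R) : R :=
  match phi_vals C K f with
  | [::] => 0
  | x :: s => foldr Num.max x s
  end.

Definition greedy_seq (R : realDomainType) (T : finType) (f : {set T} -> R)
    (S : nat -> {set T}) (L : nat) : Prop :=
  S 0%N = set0 /\
  forall l, (l < L)%N ->
    exists2 s, s \notin S l &
      S l.+1 = s |: S l /\
      (forall s', s' \notin S l -> f (s' |: S l) <= f (S l.+1)).

From HB Require Import structures.
From mathcomp Require Import all_boot all_order all_algebra.
From mathcomp Require Import lra.
Set Implicit Arguments. Unset Strict Implicit. Unset Printing Implicit Defensive.
Import Order.TTheory GRing.Theory Num.Theory.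
Local Open Scope ring_scope.

(* Let d = f(Ŝ_K) - I and let B = Ŝ_K \ S_l.  Monotonicity gives
   f(Ŝ_K) <= f(S_l ∪ B), the index I bounds f(S_l ∪ B) - f(S_l) minus the sum of
   the marginal gains over B, and each of these gains is at most the greedy
   gain f(S_{l+1}) - f(S_l).  As |B| <= K, the gap d - f(S_l) therefore shrinks
   by the factor 1 - 1/K at each step, as long as |B| >= 2 (the index only sees
   such B); if |B| <= 1, the greedy step already reaches f(Ŝ_K). *)

Lemma mem_le_foldr_max (R : realDomainType) (x y : R) (s : seq R) :
  y \in x :: s -> y <= foldr Num.max x s.
Proof.
elim: s y => [|a s IH] y /=; first by rewrite inE => /eqP ->.
rewrite !inE le_max => /orP [/eqP ->|/orP [/eqP ->|ys]].
- by rewrite IH ?mem_head ?orbT.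
- by rewrite lexx.
- by rewrite IH ?orbT // inE ys orbT.
Qed.

Lemma phi_idx_le_loc_sub_index (R : realDomainType) (T : finType)
    (C : {set {set T}}) (K : nat) (f : {set T} -> R) (A B : {set T}) :
  A \in C -> A :&: B = set0 -> (2 <= #|B| <= K)%N ->
  phi_idx f A B <= loc_sub_index C K f.
Proof.
move=> AC AB0 cardB.
have : phi_idx f A B \in phi_vals C K f.
  apply/mapP; exists (A, B) => //.
  rewrite mem_filter /= AB0 eqxx cardB.
  by apply: (allpairs_f (fun a b => (a, b))); rewrite mem_enum ?in_setT.
rewrite /loc_sub_index; case: (phi_vals C K f) => [//|x s].
exact: mem_le_foldr_max.
Qed.

Lemma le_iter_contraction (R : numDomainType) (c : R) (u : nat -> R) (n : nat) :
  0 <= c -> (forall l, (l < n)%N -> u l.+1 <= c * u l) -> u n <= c ^+ n * u 0%N.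
Proof.
move=> c_ge0; elim: n => [|n IH] step; first by rewrite mul1r.
apply: le_trans (step n (ltnSn n)) _.
rewrite exprS -mulrA ler_wpM2l // IH // => l ln.
exact/step/ltnW.
Qed.

Lemma subr_invn_ge0 (R : numFieldType) (n : nat) :
  (0 < n)%N -> 0 <= 1 - n%:R^-1 :> R.
Proof. by move=> n_gt0; rewrite subr_ge0 invf_le1 ?ler1n ?ltr0n. Qed.

Lemma contraction_of_gain (R : realFieldType) (a d x y : R) :
  0 < a -> d - x <= a * (y - x) -> d - y <= (1 - a^-1) * (d - x).
Proof.
move=> a_gt0 gain.
have : a^-1 * (d - x) <= y - x.
  by rewrite ler_pdivrMl // (le_trans gain) // mulrC.
rewrite mulrBl mul1r; lra.
Qed.

Section GreedyStep.

Variables (R : realFieldType) (T : finType) (f : {set T} -> R).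
Hypothesis f_mono : forall A B : {set T}, A \subset B -> f A <= f B.

Variables (S S' SK : {set T}).
Hypothesis S_le_S' : f S <= f S'.
Hypothesis S'_greedy : forall s, s \notin S -> f (s |: S) <= f S'.

Lemma le_greedy_of_small_residual : (#|SK :\: S| <= 1)%N -> f SK <= f S'.
Proof.
move=> card_res; have [res0|[x x_res]] := set_0Vmem (SK :\: S).
  apply: (le_trans _ S_le_S'); apply: f_mono; apply/subsetP => y ySK.
  apply: contraT => yS.
  have : y \in SK :\: S by rewrite inE yS ySK.
  by rewrite res0 inE.
have xS : x \notin S by move: x_res; rewrite inE => /andP [].
apply: (le_trans _ (S'_greedy xS)); apply: f_mono; apply/subsetP => y ySK.
rewrite in_setU1; case: (boolP (y \in S)) => yS; first by rewrite orbT.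
have : y \in SK :\: S by rewrite inE yS ySK.
by rewrite (card_le1P card_res x x_res) inE => ->.
Qed.

Lemma greedy_gain_ge (C : {set {set T}}) (K : nat) :
  S \in C -> (#|SK| <= K)%N -> f S' < f SK ->
  f SK - loc_sub_index C K f - f S <= K%:R * (f S' - f S).
Proof.
move=> SC cardSK S'_lt.
set B := SK :\: S.
have cardB2 : (2 <= #|B|)%N.
  rewrite ltnNge; apply: contraTN S'_lt => /le_greedy_of_small_residual.
  by rewrite -leNgt.
have cardBK : (#|B| <= K)%N by apply: leq_trans cardSK; rewrite subset_leq_card ?subsetDl.
have SB0 : S :&: B = set0 by rewrite /B setDE setICA setICr setI0.
have := phi_idx_le_loc_sub_index f SC SB0 (introT andP (conj cardB2 cardBK)).
have SK_le : f SK <= f (S :|: B).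
  apply: f_mono; apply/subsetP => y ySK; rewrite inE.
  by case: (boolP (y \in S)) => //= yS; rewrite inE yS ySK.
have gains : \sum_(s in B) (f (s |: S) - f S) <= #|B|%:R * (f S' - f S).
  rewrite -sum1_card natr_sum mulr_suml; apply: ler_sum => y yB.
  by rewrite mul1r lerD2r S'_greedy //; move: yB; rewrite inE => /andP [].
have cardB_le : #|B|%:R * (f S' - f S) <= K%:R * (f S' - f S).
  by rewrite ler_wpM2r ?subr_ge0 ?ler_nat.
rewrite /phi_idx; lra.
Qed.

End GreedyStep.

Definition greedy_sets (T : finType) (Sg : nat -> {set T}) (L : nat) :
  {set {set T}} := [set Sg (nat_of_ord l) | l : 'I_L.+1].

Section GreedySequence.

Variables (R : realFieldType) (T : finType) (f : {set T} -> R).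
Hypothesis f_mono : forall A B : {set T}, A \subset B -> f A <= f B.
Variables (Sg : nat -> {set T}) (L : nat).
Hypothesis greedy : greedy_seq f Sg L.

Lemma greedy_seq_subset l m : (l <= m <= L)%N -> Sg l \subset Sg m.
Proof.
elim: m => [|m IH] /andP [lm mL]; first by move: lm; rewrite leqn0 => /eqP ->.
move: lm; rewrite leq_eqVlt => /orP [/eqP -> //|lm].
apply: subset_trans (IH _) _; first by rewrite -ltnS lm ltnW.
by have [? _ [-> _]] := greedy.2 m mL; apply: subsetUr.
Qed.

Variables (K : nat) (SK : {set T}).
Hypotheses (K_gt0 : (0 < K)%N) (cardSK : (#|SK| <= K)%N).
Hypothesis greedy_lt_opt : f (Sg L) < f SK.

Let gap l := f SK - loc_sub_index (greedy_sets Sg L) K f - f (Sg l).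

Lemma greedy_gap_contraction l :
  (l <= L)%N -> gap l <= (1 - K%:R^-1) ^+ l * gap 0%N.
Proof.
move=> lL; apply: le_iter_contraction => [|m ml]; first exact: subr_invn_ge0.
have mL : (m < L)%N by apply: leq_trans lL.
have [s _ [Sg_succ S_greedy]] := greedy.2 m mL.
have S_le : f (Sg m) <= f (Sg m.+1) by apply: f_mono; rewrite Sg_succ subsetUr.
apply: contraction_of_gain; first by rewrite ltr0n.
apply: greedy_gain_ge => //.
- by apply/imsetP; exists (Ordinal (ltnW mL : (m < L.+1)%N)).
- apply: (le_lt_trans _ greedy_lt_opt).
  by apply/f_mono/greedy_seq_subset; rewrite mL leqnn.
Qed.

End GreedySequence.

Theorem mainTheorem14 (R : realFieldType) (T : finType) (f : {set T} -> R)
    (K L : nat) (SK : {set T}) (Sg : nat -> {set T}) :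
  (forall A, 0 <= f A) ->
  (forall A B : {set T}, A \subset B -> f A <= f B) ->
  (1 <= K <= #|T|)%N ->
  (L <= #|T|)%N ->
  (#|SK| <= K)%N ->
  (forall A : {set T}, (#|A| <= K)%N -> f A <= f SK) ->
  greedy_seq f Sg L ->
  let CL := [set Sg (nat_of_ord l) | l : 'I_L.+1] in
  f (Sg L) >= Num.min (f SK)
     ((1 - (1 - K%:R^-1) ^+ L) * (f SK - Num.min (loc_sub_index CL K f) (f SK))).
Proof.
move=> f_ge0 f_mono /andP [K_gt0 _] _ cardSK _ greedy /=.
rewrite -/(greedy_sets Sg L); set J := loc_sub_index _ K f.
case: (leP (f SK) (f (Sg L))) => [opt_le|greedy_lt_opt].
  by rewrite ge_min opt_le.
(* leP also rewrites Num.min J (f SK) to f SK, resp. J, in each branch. *)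
case: (leP (f SK) J) => [_|_]; first by rewrite subrr mulr0 ge_min f_ge0 orbT.
have gap_L :=
  greedy_gap_contraction f_mono greedy K_gt0 cardSK greedy_lt_opt (leqnn L).
rewrite -/J in gap_L; set c := 1 - K%:R^-1 in gap_L *.
have gap_0 : c ^+ L * (f SK - J - f (Sg 0%N)) <= c ^+ L * (f SK - J).
  by rewrite ler_wpM2l ?exprn_ge0 ?subr_invn_ge0 // lerBlDr lerDl f_ge0.
rewrite ge_min mulrBl mul1r; apply/orP; right; lra.
Qed.
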